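(* The matroid $V_{10}/5\setminus 7$ has the half-plane property; equivalently, the polynomial $\frac{\partial f_{10}}{\partial x_5}\big|_{x_7=0}$ is stable.
   Context: $V_{10}$ is the matroid on $\{1,\dots,10\}$ whose bases are all $4$-element subsets of $\{1,\dots,10\}$ except $\{1,2,3,4\},\{1,2,5,6\},\{1,2,7,8\},\{1,2,9,10\},\{3,4,5,6\},\{5,6,7,8\},\{7,8,9,10\}$, and $f_{10}=\sum_{B}\prod_{i\in B}x_i$ (sum over bases $B$ of $V_{10}$) is its basis generating polynomial. For a matroid $M$ and element $e$, the deletion $M\setminus e$ has as bases the bases of $M$ not containing $e$ (basis generating polynomial: set $x_e=0$), and the contraction $M/e$ has as bases the sets $B\setminus\{e\}$ for bases $B$ of $M$ containing $e$ (basis generating polynomial: $\partial/\partial x_e$). $V_{10}/5\setminus 7$ means $(V_{10}/5)\setminus 7$. A homogeneous real polynomial $f$ is stable if for all vectors $v$ with all entries positive and all real vectors $w$, $f(tv+w)\in\mathbb{R}[t]$ has only real roots; a matroid has the half-plane property if its basis generating polynomial is stable. *)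

From HB Require Import structures.
From mathcomp Require Import all_boot all_order all_algebra.
From mathcomp Require Import mpoly.
From mathcomp Require Import complex.
Import ComplexField.
From mathcomp Require Import reals.
Set Implicit Arguments. Unset Strict Implicit. Unset Printing Implicit Defensive.
Import Order.TTheory GRing.Theory Num.Theory.
Local Open Scope ring_scope.

(* Elements 1..10 of the paper are the ordinals 0..9 of 'I_10: element k is (inord (k-1)). *)
Definition el (k : nat) : 'I_10 := inord k.-1.

(* A matroid is represented by its set of bases. *)
Definition non_bases_V10 : seq {set 'I_10} :=
  [:: [set el 1; el 2; el 3; el 4]; [set el 1; el 2; el 5; el 6];
      [set el 1; el 2; el 7; el 8]; [set el 1; el 2; el 9; el 10];
      [set el 3; el 4; el 5; el 6]; [set el 5; el 6; el 7; el 8];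
      [set el 7; el 8; el 9; el 10]].

Definition V10 : {set {set 'I_10}} :=
  [set B : {set 'I_10} | (#|B| == 4)%N & B \notin non_bases_V10].

Definition contract (M : {set {set 'I_10}}) (e : 'I_10) : {set {set 'I_10}} :=
  [set B :\ e | B in M & e \in B].

Definition delete (M : {set {set 'I_10}}) (e : 'I_10) : {set {set 'I_10}} :=
  [set B in M | e \notin B].

Definition bgp (R : comNzRingType) (M : {set {set 'I_10}}) : {mpoly R[10]} :=
  \sum_(B in M) \prod_(i in B) 'X_i.

(* f(t v + w) as a univariate polynomial in t *)
Definition line_restr (R : comNzRingType) (f : {mpoly R[10]}) (v w : 'I_10 -> R)
  : {poly R} :=
  (map_mpoly (polyC) f).@[fun i => 'X * (v i)%:P + (w i)%:P].

Definition real_rooted (R : rcfType) (p : {poly R}) : Prop :=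
  forall z : R[i], root (map_poly (real_complex R) p) z -> complex.Im z = 0.

Definition stable (R : rcfType) (f : {mpoly R[10]}) : Prop :=
  forall v w : 'I_10 -> R, (forall i, 0 < v i) -> real_rooted (line_restr f v w).

Definition half_plane_property (R : realType) (M : {set {set 'I_10}}) : Prop :=
  stable (bgp R M).

From HB Require Import structures.
From mathcomp Require Import all_boot all_order all_algebra.
From mathcomp Require Import mpoly complex reals.
From mathcomp Require Import ring lra.
Import ComplexField.
Set Implicit Arguments. Unset Strict Implicit. Unset Printing Implicit Defensive.
Import Order.TTheory GRing.Theory Num.Theory.
Local Open Scope ring_scope.

(* Since the basis generating polynomial f of V10/5\7 has real coefficients, it is
   stable as soon as it does not vanish when all variables lie in the open upper
   half-plane.  Reading off the bases, f = e_3 - x1 x2 x6 - x3 x4 x6 in the eight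
   variables other than x5 and x7.  For such a point x consider the degree-6 polynomial
     cert(s) = D(s) (y1 y2 + E(s) (y1 + y2)),   y_i = 2 (s + x_i),
     E(s) = 2 x6 + sum over (a, b) = (x3, x4), (x8, 0), (x9, 0), (x10, 0)
                   of (2 a b + s (a + b)) / (2 s + a + b),
   where D(s) is the product of the denominators of E(s).  For Im s >= 0 every summand
   of E has nonnegative imaginary part, so D(s) <> 0 and y1, y2, E lie in the upper
   half-plane, whence cert(s) <> 0.  By Gauss-Lucas all derivatives of cert are
   root-free in the closed upper half-plane as well, so all its coefficients below the
   leading one are nonzero; the coefficient of s^3 is 32 f(x). *)

Section UpperHalfPlane.
Variable R : rcfType.
Local Notation C := R[i].
Local Notation Re := (@complex.Re R).
Local Notation Im := (@complex.Im R).

Lemma ImD (a b : C) : Im (a + b) = Im a + Im b.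
Proof. by case: a => ? ?; case: b. Qed.

Lemma ImB (a b : C) : Im (a - b) = Im a - Im b.
Proof. by case: a => ? ?; case: b. Qed.

Lemma Im_gt0_neq0 (u : C) : 0 < Im u -> u != 0.
Proof. by apply: contraTneq => ->; rewrite ltxx. Qed.

Lemma add_sqr_ge0 (a b : R) : 0 <= a ^+ 2 + b ^+ 2.
Proof. by rewrite addr_ge0 ?sqr_ge0. Qed.

Lemma add_sqr_gt0 (a b : R) : 0 < b -> 0 < a ^+ 2 + b ^+ 2.
Proof. by move=> b_gt0; rewrite ltr_wpDl ?sqr_ge0 ?exprn_gt0. Qed.

Lemma Im_inv_lt0 (u : C) : 0 < Im u -> Im u^-1 < 0.
Proof.
by case: u => a b /= b_gt0; rewrite oppr_lt0 divr_gt0 ?add_sqr_gt0.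
Qed.

Lemma Im_div_ge0 (a b : C) : b != 0 -> 0 <= Im (a * b^*) -> 0 <= Im (a / b).
Proof.
case: a => a1 a2; case: b => b1 b2 /= b_neq0 ge0.
have n_gt0 : 0 < b1 ^+ 2 + b2 ^+ 2.
  rewrite lt_def addr_ge0 ?sqr_ge0 // andbT paddr_eq0 ?sqr_ge0 //.
  by rewrite !sqrf_eq0; apply: contra b_neq0 => /andP[/eqP-> /eqP->].
rewrite (_ : _ + _ = (a1 * - b2 + a2 * b1) / (b1 ^+ 2 + b2 ^+ 2)).
  by rewrite divr_ge0 // ltW.
by field; rewrite gt_eqF.
Qed.

Lemma Im_class_den_gt0 (s a b : C) : 0 <= Im s -> 0 < Im a -> 0 <= Im b ->
  0 < Im (2%:R * s + (a + b)).
Proof. by case: s => ? ?; case: a => ? ?; case: b => ? ? /=; lra. Qed.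

Definition class_ratio (a b s : C) := ((a + b) * s + a * b *+ 2) / (2%:R * s + (a + b)).

Lemma Im_class_ratio_ge0 (s a b : C) : 0 <= Im s -> 0 < Im a -> 0 <= Im b ->
  0 <= Im (class_ratio a b s).
Proof.
move=> s_ge0 a_gt0 b_ge0; apply: Im_div_ge0.
  exact/Im_gt0_neq0/Im_class_den_gt0.
have -> : Im (((a + b) * s + a * b *+ 2) * (2%:R * s + (a + b))^*) =
    2%:R * Im a * ((Re b + Re s) ^+ 2 + (Im b + Im s) ^+ 2) +
    2%:R * Im b * ((Re a + Re s) ^+ 2 + (Im a + Im s) ^+ 2) +
    Im s * ((Re a - Re b) ^+ 2 + (Im a - Im b) ^+ 2).
  by case: s {s_ge0} => ? ?; case: a {a_gt0} => ? ?; case: b {b_ge0} => ? ? /=; ring.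
by do ![exact: add_sqr_ge0 | exact: ler0n | exact: ltW | done | apply: addr_ge0 | apply: mulr_ge0].
Qed.

Lemma Im_gt0_mul_add_neq0 (y1 y2 e : C) : 0 < Im y1 -> 0 < Im y2 -> 0 < Im e ->
  y1 * y2 + e * (y1 + y2) != 0.
Proof.
move=> y1_gt0 y2_gt0 e_gt0; apply/eqP => eq0.
have : Im ((y1 * y2 + e * (y1 + y2)) * (y1 + y2)^*) =
    Im y1 * (Re y2 ^+ 2 + Im y2 ^+ 2) + Im y2 * (Re y1 ^+ 2 + Im y1 ^+ 2) +
    Im e * ((Re y1 + Re y2) ^+ 2 + (Im y1 + Im y2) ^+ 2).
  by case: y1 {y1_gt0 eq0} => ? ?; case: y2 {y2_gt0} => ? ?; case: e {e_gt0} => ? ? /=; ring.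
rewrite eq0 mul0r /=.
have : 0 <= Im y1 * (Re y2 ^+ 2 + Im y2 ^+ 2) by rewrite mulr_ge0 ?add_sqr_ge0 ?ltW.
have : 0 < Im y2 * (Re y1 ^+ 2 + Im y1 ^+ 2) by rewrite mulr_gt0 // add_sqr_gt0.
have : 0 <= Im e * ((Re y1 + Re y2) ^+ 2 + (Im y1 + Im y2) ^+ 2).
  by rewrite mulr_ge0 ?add_sqr_ge0 ?ltW.
lra.
Qed.

End UpperHalfPlane.

Lemma meval_map_mpolyX (S T : comNzRingType) (f : {rmorphism S -> T}) n
    (xi : 'I_n -> T) i :
  (map_mpoly f 'X_i).@[xi] = xi i.
Proof. by rewrite map_mpolyX mevalXU. Qed.

Section Stability.
Variable R : rcfType.
Local Notation C := R[i].
Local Notation Im := (@complex.Im R).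

Lemma horner_line_restr_bgp (M : {set {set 'I_10}}) (v w : 'I_10 -> R) (z : C) :
  (map_poly (real_complex R) (line_restr (bgp R M) v w)).[z] =
  \sum_(B in M) \prod_(i in B) (z * real_complex R (v i) + real_complex R (w i)).
Proof.
rewrite /line_restr /bgp (rmorph_sum (map_mpoly polyC)) (rmorph_sum (meval _)).
rewrite (rmorph_sum (map_poly _)) horner_sum; apply: eq_bigr => B _.
rewrite (rmorph_prod (map_mpoly polyC)) (rmorph_prod (meval _)).
rewrite (rmorph_prod (map_poly _)) horner_prod.
apply: eq_bigr => i _.
transitivity ((map_poly (real_complex R) ('X * (v i)%:P + (w i)%:P)).[z]).
  by congr (horner (map_poly _ _) _); apply: meval_map_mpolyX.
by rewrite rmorphD rmorphM /= map_polyX !map_polyC !hornerE.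
Qed.

Lemma Im_line (z : C) (a b : R) :
  Im (z * real_complex R a + real_complex R b) = Im z * a.
Proof. by case: z => x y /=; ring. Qed.

Lemma conjc_line (z : C) (a b : R) :
  (z * real_complex R a + real_complex R b)^* = z^* * real_complex R a + real_complex R b.
Proof. by case: z => x y /=; congr Complex; ring. Qed.

Lemma stable_bgp_of_nonvanishing (M : {set {set 'I_10}}) :
  (forall xi : 'I_10 -> C, (forall i, 0 < Im (xi i)) ->
    \sum_(B in M) \prod_(i in B) xi i != 0) ->
  stable (bgp R M).
Proof.
move=> nonvanishing v w v_gt0 z; rewrite /root horner_line_restr_bgp => /eqP f_eq0.
have [z_lt0|z_gt0|//] := ltgtP (Im z) 0.
- have : \sum_(B in M) \prod_(i in B) (z^* * real_complex R (v i) + real_complex R (w i)) != 0.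
    apply: nonvanishing => i; rewrite Im_line mulr_gt0 //.
    by case: z z_lt0 {f_eq0} => ? ? /=; rewrite oppr_gt0.
  suff -> : \sum_(B in M) \prod_(i in B) (z^* * real_complex R (v i) + real_complex R (w i))
      = (\sum_(B in M) \prod_(i in B) (z * real_complex R (v i) + real_complex R (w i)))^*.
    by rewrite f_eq0 rmorph0 eqxx.
  rewrite rmorph_sum; apply: eq_bigr => B _; rewrite rmorph_prod.
  by apply: eq_bigr => i _; apply/esym/conjc_line.
- have : \sum_(B in M) \prod_(i in B) (z * real_complex R (v i) + real_complex R (w i)) != 0.
    by apply: nonvanishing => i; rewrite Im_line mulr_gt0.
  by rewrite f_eq0 eqxx.
Qed.

End Stability.

Section GaussLucas.
Variable R : rcfType.
Local Notation C := R[i].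
Local Notation Im := (@complex.Im R).

Definition rootfree_cuhp (p : {poly C}) := forall z : C, 0 <= Im z -> p.[z] != 0.

Lemma horner_deriv_prod_XsubC (r : seq C) (z : C) : z \notin r ->
  (\prod_(a <- r) ('X - a%:P))^`().[z] =
  (\prod_(a <- r) ('X - a%:P)).[z] * \sum_(a <- r) (z - a)^-1.
Proof.
elim: r => [|a r IHr]; first by rewrite !big_nil derivC horner0 mulr0.
rewrite inE negb_or => /andP[za zr].
have za_neq0 : z - a != 0 by rewrite subr_eq0.
rewrite !big_cons derivM derivXsubC mul1r !hornerE IHr //.
by field.
Qed.

Lemma deriv_rootfree_cuhp (p : {poly C}) :
  (1 < size p)%N -> rootfree_cuhp p -> rootfree_cuhp p^`().
Proof.
move=> p_gt1 p_rootfree z z_ge0.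
have [r p_eq] := closed_field_poly_normal p.
have lc_neq0 : lead_coef p != 0 by rewrite lead_coef_eq0 -size_poly_gt0 ltnW.
have r_lt0 a : a \in r -> Im a < 0.
  move=> ar; rewrite ltNge; apply/negP => a_ge0.
  have := p_rootfree a a_ge0; rewrite p_eq hornerZ mulf_eq0 negb_or lc_neq0 /=.
  by rewrite -/(root _ a) root_prod_XsubC ar.
have zr : z \notin r by apply/negP => /r_lt0; rewrite ltNge z_ge0.
have inv_lt0 b : b \in r -> Im (z - b)^-1 < 0.
  by move=> /r_lt0 b_lt0; apply: Im_inv_lt0; rewrite ImB; lra.
have sum_lt0 : Im (\sum_(b <- r) (z - b)^-1) < 0.
  case: r p_eq inv_lt0 {r_lt0 zr} => [|a r] p_eq inv_lt0.
    by move: p_gt1; rewrite p_eq big_nil size_scale // size_poly1.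
  rewrite big_cons ImD.
  have : Im (\sum_(b <- r) (z - b)^-1) <= 0.
    rewrite big_seq; apply: (big_ind (fun x : C => Im x <= 0)) => // [x y|b b_r].
      by rewrite ImD; lra.
    by apply/ltW/inv_lt0; rewrite inE b_r orbT.
  by have := inv_lt0 a (mem_head a r); lra.
have prod_neq0 : ~~ root (\prod_(a <- r) ('X - a%:P)) z by rewrite root_prod_XsubC.
rewrite p_eq derivZ hornerZ horner_deriv_prod_XsubC // !mulf_neq0 //.
by apply/eqP => sum_eq0; move: sum_lt0; rewrite sum_eq0 ltxx.
Qed.

Lemma coef_rootfree_cuhp (p : {poly C}) n k :
  rootfree_cuhp p -> p`_n != 0 -> (k <= n)%N -> p`_k != 0.
Proof.
elim: k p n => [|k IHk] p n p_rootfree pn_neq0 le_kn.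
  by rewrite -horner_coef0 p_rootfree //= lexx.
case: n le_kn pn_neq0 => [//|n] le_kn pn_neq0.
have p_gt1 : (1 < size p)%N.
  by apply: contraR pn_neq0; rewrite -leqNgt => /leq_sizeP ->.
have := IHk _ n (deriv_rootfree_cuhp p_gt1 p_rootfree).
by rewrite !coef_deriv !mulrn_eq0 /=; apply.
Qed.

End GaussLucas.

Fixpoint elem_sym (K : comNzRingType) (s : seq K) (k : nat) : K :=
  if k is k'.+1 then (if s is x :: s' then elem_sym s' k + x * elem_sym s' k' else 0) else 1.

Section SubsetSums.
Variables (T : finType) (K : comNzRingType) (F : T -> K).

Definition subset_sum (A : {set T}) k :=
  \sum_(X : {set T} | (X \subset A) && (#|X| == k)) \prod_(i in X) F i.

Lemma subset_sum0 (A : {set T}) : subset_sum A 0 = 1.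
Proof.
rewrite /subset_sum (bigD1 set0) ?sub0set ?cards0 //= big_set0 big1 ?addr0 //.
by move=> X /andP[/andP[_ /eqP/cards0_eq ->]]; rewrite eqxx.
Qed.

Lemma subset_sum_set0 k : subset_sum set0 k.+1 = 0.
Proof.
by rewrite /subset_sum big_pred0 // => X; rewrite subset0; case: eqP => // ->; rewrite cards0.
Qed.

Lemma subset_sumU1 (A : {set T}) (a : T) k : a \notin A ->
  subset_sum (a |: A) k.+1 = subset_sum A k.+1 + F a * subset_sum A k.
Proof.
move=> aA; have aY (Y : {set T}) : Y \subset A -> a \notin Y.
  by move=> sYA; apply/negP => /(subsetP sYA); apply/negP.
rewrite /subset_sum (bigID (fun X : {set T} => a \in X)) /= addrC.
congr (_ + _).
  apply: eq_bigl => X; apply/andP/andP => [[/andP[sXaA ->] aX]|[sXA ->]].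
    split=> //; apply/subsetP => x xX; have := subsetP sXaA x xX.
    by rewrite !inE; case: eqP => [ex|//]; rewrite -ex xX in aX.
  by rewrite (subset_trans sXA) ?subsetUr ?aY.
rewrite big_distrr /=.
rewrite (reindex_onto (fun Y : {set T} => a |: Y) (fun X : {set T} => X :\ a)); last first.
  by move=> X /andP[_ aX]; rewrite setD1K.
apply: eq_big => [Y|Y /andP[_ /eqP eY]]; last by rewrite big_setU1 // -eY setD11.
apply/idP/idP => [/andP[/andP[/andP[sYaA cardY] _] /eqP eY]|/andP[sYA cardY]].
  have aY' : a \notin Y by rewrite -eY setD11.
  rewrite cardsU1 aY' add1n eqSS in cardY; rewrite cardY andbT.
  apply/subsetP => x xY; have := subsetP sYaA x; rewrite !inE xY orbT => /(_ isT).
  by case/orP => // /eqP ex; rewrite -ex xY in aY'.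
by rewrite setU11 cardsU1 aY // add1n eqSS cardY setU1K ?aY // eqxx setUS.
Qed.

Lemma subset_sum_seq s k : uniq s -> subset_sum [set:: s] k = elem_sym (map F s) k.
Proof.
elim: s k => [|a s IHs] k.
  by case: k => [|k] _; rewrite ?subset_sum0 // set_nil subset_sum_set0.
case/andP=> a_s s_uniq; case: k => [|k]; first by rewrite subset_sum0.
by rewrite set_cons subset_sumU1 ?IHs // inE.
Qed.

End SubsetSums.

Lemma setU1_eqE (T : finType) (a : T) (X S : {set T}) : a \notin X ->
  (a |: X == S) = (a \in S) && (X == S :\ a).
Proof.
move=> aX; apply/eqP/andP => [<-|[aS /eqP ->]]; last by rewrite setD1K.
by rewrite setU11 setU1K.
Qed.

Lemma cards3 (T : finType) (a b c : T) : a != b -> a != c -> b != c ->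
  #|[set a; b; c]| = 3.
Proof. by move=> ab ac bc; rewrite -setUA cardsU1 cards2 bc !inE negb_or ab ac. Qed.

Lemma prod_set3 (T : finType) (K : comNzRingType) (F : T -> K) (a b c : T) :
  a != b -> a != c -> b != c -> \prod_(i in [set a; b; c]) F i = F a * F b * F c.
Proof.
move=> ab ac bc; rewrite -setUA big_setU1 /=; last by rewrite !inE negb_or ab ac.
by rewrite big_setU1 ?inE // big_set1 mulrA.
Qed.

Lemma mem_contract (M : {set {set 'I_10}}) e X :
  (X \in contract M e) = (e \notin X) && (e |: X \in M).
Proof.
apply/imsetP/andP => [[B /setIdP[BM eB] ->]|[eX eXM]].
  by rewrite setD11 setD1K.
by exists (e |: X); rewrite ?setU1K // inE eXM setU11.
Qed.

Lemma mem_delete (M : {set {set 'I_10}}) e X :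
  (X \in delete M e) = (X \in M) && (e \notin X).
Proof. by rewrite inE. Qed.

Section LinearFactors.
Variable K : comNzRingType.

Definition lin (a b : K) : {poly K} := a *: 'X + b%:P.

Lemma horner_lin a b z : (lin a b).[z] = a * z + b.
Proof. by rewrite /lin !hornerE. Qed.

Lemma coef_lin a b i :
  (lin a b)`_i = if i == 0%N then b else if i == 1%N then a else 0.
Proof.
rewrite /lin coefD coefZ coefX coefC.
by case: i => [|[|i]]; rewrite /= ?mulr1 ?mulr0 ?add0r ?addr0.
Qed.

Lemma coefMlin0 (p : {poly K}) a b : (p * lin a b)`_0 = p`_0 * b.
Proof. by rewrite /lin mulrDr coefD -scalerAr coefZ coefMX mulr0 add0r coefMC. Qed.

Lemma coefMlinS (p : {poly K}) a b i : (p * lin a b)`_i.+1 = p`_i * a + p`_i.+1 * b.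
Proof. by rewrite /lin mulrDr coefD -scalerAr coefZ coefMX coefMC mulrC. Qed.

End LinearFactors.

Section Certificate.
Variable R : rcfType.
Local Notation C := R[i].
Local Notation Im := (@complex.Im R).
Variables x1 x2 x3 x4 x6 x8 x9 x10 : C.

Definition class_den (a b : C) := lin 2%:R (a + b).
Definition class_num (a b : C) := lin (a + b) (a * b *+ 2).

Definition cert_den := class_den x3 x4 * class_den x8 0 * class_den x9 0 * class_den x10 0.

Definition cert_num :=
  (x6 *+ 2) *: cert_den
  + class_num x3 x4 * class_den x8 0 * class_den x9 0 * class_den x10 0
  + class_num x8 0 * class_den x3 x4 * class_den x9 0 * class_den x10 0
  + class_num x9 0 * class_den x3 x4 * class_den x8 0 * class_den x10 0
  + class_num x10 0 * class_den x3 x4 * class_den x8 0 * class_den x9 0.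

(* Left-nested products of linear factors, so that [coefMlinS] computes coefficients. *)
Definition cert := cert_den * lin 2%:R (x1 *+ 2) * lin 2%:R (x2 *+ 2)
  + cert_num * lin 4%:R ((x1 + x2) *+ 2).

Lemma coef6_cert : cert`_6 = 64%:R.
Proof.
rewrite /cert /cert_num /cert_den /class_num /class_den.
rewrite !(coefD, coefZ, coefMlinS, coefMlin0, coef_lin) /=.
ring.
Qed.

Lemma coef3_cert : cert`_3 =
  32%:R * (elem_sym [:: x1; x2; x3; x4; x6; x8; x9; x10] 3 - x1 * x2 * x6 - x3 * x4 * x6).
Proof.
rewrite /cert /cert_num /cert_den /class_num /class_den.
rewrite !(coefD, coefZ, coefMlinS, coefMlin0, coef_lin) /=.
ring.
Qed.

Lemma horner_cert s : cert.[s] = cert_den.[s] * ((s + x1) *+ 2 * ((s + x2) *+ 2))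
  + cert_num.[s] * ((s + x1) *+ 2 + (s + x2) *+ 2).
Proof.
rewrite /cert /cert_num /cert_den /class_den /class_num.
rewrite !(hornerD, hornerZ, hornerM, hornerX, hornerC).
ring.
Qed.

Lemma horner_cert_num s :
  2%:R * s + (x3 + x4) != 0 -> 2%:R * s + (x8 + 0) != 0 -> 2%:R * s + (x9 + 0) != 0 ->
  2%:R * s + (x10 + 0) != 0 ->
  cert_num.[s] = cert_den.[s] * (x6 *+ 2 + class_ratio x3 x4 s + class_ratio x8 0 s
    + class_ratio x9 0 s + class_ratio x10 0 s).
Proof.
move=> d34 d8 d9 d10.
rewrite /cert_num /cert_den /class_den /class_num /class_ratio.
rewrite !(hornerD, hornerZ, hornerM, hornerX, hornerC).
field.
by move: d8 d9 d10; rewrite !addr0 => -> -> ->; rewrite d34.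
Qed.

Lemma horner_cert_den s : cert_den.[s] = (2%:R * s + (x3 + x4)) * (2%:R * s + (x8 + 0))
  * (2%:R * s + (x9 + 0)) * (2%:R * s + (x10 + 0)).
Proof. by rewrite /cert_den /class_den !(hornerM, horner_lin). Qed.

Lemma rootfree_cert : 0 < Im x1 -> 0 < Im x2 -> 0 < Im x3 -> 0 < Im x4 ->
  0 < Im x6 -> 0 < Im x8 -> 0 < Im x9 -> 0 < Im x10 -> rootfree_cuhp cert.
Proof.
move=> x1_gt0 x2_gt0 x3_gt0 x4_gt0 x6_gt0 x8_gt0 x9_gt0 x10_gt0 s s_ge0.
have den_neq0 a b : 0 < Im a -> 0 <= Im b -> 2%:R * s + (a + b) != 0.
  by move=> a_gt0 b_ge0; apply/Im_gt0_neq0/Im_class_den_gt0.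
have d34 := den_neq0 _ _ x3_gt0 (ltW x4_gt0).
have d8 := den_neq0 x8 0 x8_gt0 (lexx 0).
have d9 := den_neq0 x9 0 x9_gt0 (lexx 0).
have d10 := den_neq0 x10 0 x10_gt0 (lexx 0).
rewrite horner_cert (horner_cert_num d34 d8 d9 d10) -mulrA -mulrDr.
rewrite mulf_neq0 // ?horner_cert_den ?mulf_neq0 //.
have := Im_class_ratio_ge0 s_ge0 x3_gt0 (ltW x4_gt0).
have := Im_class_ratio_ge0 (b := 0) s_ge0 x8_gt0 (lexx 0).
have := Im_class_ratio_ge0 (b := 0) s_ge0 x9_gt0 (lexx 0).
have := Im_class_ratio_ge0 (b := 0) s_ge0 x10_gt0 (lexx 0).
move=> r10 r9 r8 r34; apply: Im_gt0_mul_add_neq0; rewrite ?mulr2n !ImD; lra.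
Qed.

End Certificate.

Lemma val_el k : (k <= 10)%N -> (el k : nat) = k.-1.
Proof. by move=> le_k10; rewrite /el inordK //; case: k le_k10. Qed.

Lemma eq_el j k : (j <= 10)%N -> (k <= 10)%N -> (el j == el k) = (j.-1 == k.-1).
Proof. by move=> le_j le_k; rewrite -val_eqE /= !val_el. Qed.

Definition ground8 : seq 'I_10 := [seq el k | k <- [:: 1; 2; 3; 4; 6; 8; 9; 10]].
Definition line126 : {set 'I_10} := [set el 1; el 2; el 6].
Definition line346 : {set 'I_10} := [set el 3; el 4; el 6].

Lemma subset_ground8 (X : {set 'I_10}) :
  (X \subset [set:: ground8]) = (el 5 \notin X) && (el 7 \notin X).
Proof.
have mem_ground8 i : (i \in [set:: ground8]) = (i != el 5) && (i != el 7).
  case: i => m lt_m10; rewrite !inE -!val_eqE /= !val_el //.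
  by do 10! case: m lt_m10 => [|m] lt_m10 //.
apply/subsetP/andP => [sX|[X5 X7] i iX].
  by split; apply/negP => /sX; rewrite mem_ground8 eqxx ?andbF.
by rewrite mem_ground8; apply/andP; split; [move: X5 | move: X7]; apply: contraNneq => <-.
Qed.

Lemma mem_V10_5_7 (X : {set 'I_10}) : (X \in delete (contract V10 (el 5)) (el 7)) =
  [&& X \subset [set:: ground8], #|X| == 3, X != line126 & X != line346].
Proof.
rewrite mem_delete mem_contract subset_ground8.
case X5: (el 5 \in X) => //=; case X7: (el 7 \in X); rewrite /= ?andbF //.
rewrite /V10 inE cardsU1 X5 add1n eqSS /non_bases_V10 !inE !setU1_eqE ?X5 //.
rewrite !inE !eq_el //=.
have -> : [set el 1; el 2; el 5; el 6] :\ el 5 = line126.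
  by apply/setP => i; rewrite !inE; case: (eqVneq i (el 5)) => [->|]; rewrite ?eq_el //= ?orbF.
have -> : [set el 3; el 4; el 5; el 6] :\ el 5 = line346.
  by apply/setP => i; rewrite !inE; case: (eqVneq i (el 5)) => [->|]; rewrite ?eq_el //= ?orbF.
have -> : (X == [set el 5; el 6; el 7; el 8] :\ el 5) = false.
  by apply: contraFF X7 => /eqP ->; rewrite !inE !eq_el.
by case: (#|X| == 3); case: (X == line126); case: (X == line346).
Qed.

Lemma bgp_sum_V10_5_7 (K : comNzRingType) (xi : 'I_10 -> K) :
  \sum_(B in delete (contract V10 (el 5)) (el 7)) \prod_(i in B) xi i =
  elem_sym (map xi ground8) 3 - xi (el 1) * xi (el 2) * xi (el 6)
    - xi (el 3) * xi (el 4) * xi (el 6).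
Proof.
have uniq_ground8 : uniq ground8 by rewrite /= !inE !eq_el.
have lines_neq : line346 != line126.
  by apply/negP => /eqP/setP/(_ (el 3)); rewrite !inE !eq_el.
rewrite -(subset_sum_seq xi 3 uniq_ground8) /subset_sum.
rewrite [X in _ = X - _ - _](bigD1 line126) /=; last first.
  by rewrite subset_ground8 cards3 ?eq_el // !inE !eq_el.
rewrite [X in _ = _ + X - _ - _](bigD1 line346) /=; last first.
  by rewrite lines_neq subset_ground8 cards3 ?eq_el // !inE !eq_el.
rewrite /line126 /line346 !prod_set3 ?eq_el //.
set rest := (X in _ = _ + (_ + X) - _ - _).
suff -> : \sum_(B in delete (contract V10 (el 5)) (el 7)) \prod_(i in B) xi i = rest by ring.
by apply: eq_bigl => X; rewrite mem_V10_5_7 !andbA.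
Qed.

Theorem lemma4p2 (R : realType) :
  half_plane_property R (delete (contract V10 (el 5)) (el 7)).
Proof.
apply: stable_bgp_of_nonvanishing => xi xi_gt0; rewrite bgp_sum_V10_5_7.
have cert_rootfree := rootfree_cert (xi_gt0 (el 1)) (xi_gt0 (el 2)) (xi_gt0 (el 3))
  (xi_gt0 (el 4)) (xi_gt0 (el 6)) (xi_gt0 (el 8)) (xi_gt0 (el 9)) (xi_gt0 (el 10)).
have := @coef_rootfree_cuhp _ _ 6 3 cert_rootfree.
rewrite coef6_cert coef3_cert pnatr_eq0 => /(_ isT isT).
by rewrite mulf_eq0 negb_or pnatr_eq0.
Qed.
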